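(* Let $\mathbb F$ be a field, let $\chi,\eta\in\mathbb F[x]$ be monic polynomials of degree $l\ge1$, and let $a,b,c,d\in\mathbb F$ with $ad-bc\ne0$. (a) If the matrix pair $(aI_l+b\Phi_\chi,\ cI_l+d\Phi_\chi)$ is equivalent to the pair $(I_l,\Phi_\eta)$, then \[ \eta(x)=\varepsilon\,(d-xb)^l\,\chi\!\left(\frac{xa-c}{d-xb}\right) \] for some $\varepsilon\in\mathbb F$. (b) If $aI_l+b\Phi_\chi$ is nonsingular and $\eta(x)=\varepsilon\,(d-xb)^l\,\chi\!\left(\frac{xa-c}{d-xb}\right)$ for some $\varepsilon\in\mathbb F$, then the characteristic polynomials of $(cI_l+d\Phi_\chi)(aI_l+b\Phi_\chi)^{-1}$ and of $\Phi_\eta$ are equal.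
   Context: For a monic $\chi(x)=x^l-u_1x^{l-1}-\dots-u_l\in\mathbb F[x]$, $l\ge1$, $\Phi_\chi$ is the $l\times l$ companion matrix with ones on the subdiagonal, last column $(u_l,\dots,u_2,u_1)^T$ (top to bottom), and zeros elsewhere; its characteristic polynomial is $\chi$. Two pairs $(A,B)$, $(A',B')$ of matrices of the same size are equivalent if there exist nonsingular $P,Q$ with $A'=PAQ$ and $B'=PBQ$. The expression $(d-xb)^l\chi\left(\frac{xa-c}{d-xb}\right)$ denotes the polynomial obtained by clearing denominators (a polynomial since $\deg\chi=l$). *)

From HB Require Import structures.
From mathcomp Require Import all_boot all_order all_algebra.
Set Implicit Arguments. Unset Strict Implicit. Unset Printing Implicit Defensive.
Import GRing.Theory.
Local Open Scope ring_scope.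

(* Companion matrix of chi = x^l - u_1 x^{l-1} - ... - u_l  (so u_k = - chi`_(l-k)):
   ones on the subdiagonal (entry (j+1, j)), last column (u_l, ..., u_1)^T,
   i.e. entry (i, l-1) = u_(l-i) = - chi`_i, zeros elsewhere. *)
Definition companion (F : fieldType) (l : nat) (chi : {poly F}) : 'M[F]_l :=
  \matrix_(i < l, j < l)
     if (j.+1 == l)%N then - chi`_i else ((i : nat) == j.+1)%:R.

Definition pair_equiv (F : fieldType) (l : nat) (A B A' B' : 'M[F]_l) : Prop :=
  exists P Q : 'M[F]_l, [/\ P \in unitmx, Q \in unitmx,
                            A' = P *m A *m Q & B' = P *m B *m Q].

(* (d - x b)^l chi((x a - c)/(d - x b)) with denominators cleared:
   sum_i chi_i (x a - c)^i (d - x b)^(l - i). *)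
Definition mobius_poly (F : fieldType) (l : nat) (a b c d : F) (chi : {poly F})
  : {poly F} :=
  \sum_(i < l.+1) chi`_i *: ((a *: 'X - c%:P) ^+ i * (d%:P - b *: 'X) ^+ (l - i)).

From HB Require Import structures.
From mathcomp Require Import all_boot all_order all_algebra.
From mathcomp Require Import ring.
Set Implicit Arguments. Unset Strict Implicit. Unset Printing Implicit Defensive.
Import GRing.Theory.
Local Open Scope ring_scope.

(* Everything is read off the pencil x A - B of a pair (A, B).  Equivalent pairs
   have pencils whose determinants differ by the unit det P * det Q; the pencil
   of (I, M) is the characteristic matrix of M; and for A = a + b C,
   B = c + d C the pencil is (x a - c) - (d - x b) C, whose determinant is the
   characteristic polynomial of C homogenized at (x a - c, d - x b).  For the
   companion matrix C of chi this is the Mobius transform of chi, and when A is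
   invertible it is char_poly (B A^-1) times det A, the scalar being fixed by
   comparing leading coefficients. *)

Lemma char_poly_trmx (R : comNzRingType) n (A : 'M[R]_n) :
  char_poly A^T = char_poly A.
Proof.
rewrite /char_poly -det_tr; congr (\det _).
by apply/matrixP => i j; rewrite !mxE eq_sym.
Qed.

Lemma horner_char_poly (R : comNzRingType) n (A : 'M[R]_n) (x : R) :
  (char_poly A).[x] = \det (x%:M - A).
Proof.
rewrite -horner_evalE /char_poly -det_map_mx; congr (\det _).
apply/matrixP => i j.
by rewrite !mxE rmorphB rmorphMn /= !horner_evalE hornerX hornerC.
Qed.

Lemma det_homog_char_poly_field (F : fieldType) n (A : 'M[F]_n) (s t : F) :
  \det (s%:M - t *: A) = \sum_(i < n.+1) (char_poly A)`_i * s ^+ i * t ^+ (n - i).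
Proof.
have [->|t_neq0] := eqVneq t 0.
  rewrite scale0r subr0 det_scalar big_ord_recr /= subnn expr0 mulr1.
  move: (monicP (char_poly_monic A)); rewrite /lead_coef size_char_poly /= => ->; rewrite mul1r big1 ?add0r // => i _.
  by rewrite expr0n subn_eq0 leqNgt ltn_ord mulr0.
have -> : s%:M - t *: A = t%:M *m ((s / t)%:M - A).
  by rewrite mul_scalar_mx scalerBr scale_scalar_mx mulrC divfK.
rewrite det_mulmx det_scalar -horner_char_poly horner_coef size_char_poly.
rewrite mulr_sumr; apply: eq_bigr => i _.
have le_i_n : (i <= n)%N by rewrite -ltnS.
rewrite -{1}(subnKC le_i_n) exprD expr_div_n.
by field; rewrite expf_neq0.
Qed.

Lemma det_homog_char_poly (R : idomainType) n (A : 'M[R]_n) (s t : R) :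
  \det (s%:M - t *: A) = \sum_(i < n.+1) (char_poly A)`_i * s ^+ i * t ^+ (n - i).
Proof.
have tofrac_inj : injective (@tofrac R) by move=> p q /eqP; rewrite tofrac_eq => /eqP.
apply: tofrac_inj.
rewrite -det_map_mx map_mxB map_mxZ map_scalar_mx det_homog_char_poly_field.
rewrite -map_char_poly (rmorph_sum (@tofrac R)); apply: eq_bigr => i _.
by rewrite coef_map /= !rmorphM !rmorphXn.
Qed.

Definition pencil (R : comNzRingType) n (A B : 'M[R]_n) : 'M[{poly R}]_n :=
  'X *: map_mx polyC A - map_mx polyC B.

Lemma pencil1mx (R : comNzRingType) n (M : 'M[R]_n) :
  pencil 1%:M M = char_poly_mx M.
Proof. by rewrite /pencil map_mx1 scalemx1. Qed.

Lemma pencil_equiv (R : comNzRingType) n (P Q A B : 'M[R]_n) :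
  pencil (P *m A *m Q) (P *m B *m Q) =
  map_mx polyC P *m pencil A B *m map_mx polyC Q.
Proof. by rewrite /pencil !map_mxM mulmxBr mulmxBl -scalemxAr -scalemxAl. Qed.

Lemma pencil_mulmx_invmx (F : fieldType) n (A B : 'M[F]_n) :
  A \in unitmx -> char_poly_mx (B *m invmx A) *m map_mx polyC A = pencil A B.
Proof.
move=> A_unit; rewrite /char_poly_mx mulmxBl mul_scalar_mx map_mxM -mulmxA.
by rewrite -map_mxM mulVmx // map_mx1 mulmx1.
Qed.

Lemma pencil_affine (R : comNzRingType) n (M : 'M[R]_n) (a b c d : R) :
  pencil (a%:M + b *: M) (c%:M + d *: M) =
  (a *: 'X - c%:P)%:M - (d%:P - b *: 'X) *: map_mx polyC M.
Proof.
apply/matrixP => i j; rewrite !mxE -!mul_polyC !rmorphD !rmorphM !rmorphMn /=.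
by case: (i == j) => /=; ring.
Qed.

Lemma companion_trmx (F : fieldType) (p : {poly F}) :
  companion (size p).-1 p = (companionmx p)^T.
Proof.
apply/matrixP => i j; rewrite !mxE.
have d_gt0 : (0 < (size p).-1)%N := leq_ltn_trans (leq0n j) (ltn_ord j).
have -> : (j.+1 == (size p).-1) = (j == (size p).-2 :> nat).
  by move: (size p).-1 d_gt0 (nat_of_ord j) => [|k] // _ m; rewrite eqSS.
by case: ifP => // _; rewrite eq_sym.
Qed.

Lemma char_poly_companion (F : fieldType) l (chi : {poly F}) :
  chi \is monic -> size chi = l.+1 -> char_poly (companion l chi) = chi.
Proof.
move=> chi_monic size_chi.
have := companionmxK chi_monic; rewrite -char_poly_trmx -companion_trmx.
by rewrite size_chi.
Qed.

Lemma det_pencil_companion (F : fieldType) l (chi : {poly F}) (a b c d : F) :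
  chi \is monic -> size chi = l.+1 ->
  \det (pencil (a%:M + b *: companion l chi) (c%:M + d *: companion l chi)) =
  mobius_poly l a b c d chi.
Proof.
move=> chi_monic size_chi.
rewrite pencil_affine det_homog_char_poly -map_char_poly.
rewrite char_poly_companion //; apply: eq_bigr => i _.
by rewrite coef_map /= -mulrA mul_polyC.
Qed.

Lemma char_poly_pair_equiv (F : fieldType) n (A B M : 'M[F]_n) :
  pair_equiv A B 1%:M M -> exists eps : F, char_poly M = eps *: \det (pencil A B).
Proof.
case=> P [Q [_ _ def1 defM]]; exists (\det P * \det Q).
rewrite /char_poly -pencil1mx def1 defM pencil_equiv !det_mulmx !det_map_mx.
by rewrite -!mul_polyC polyCM mulrAC.
Qed.

Lemma char_poly_mulmx_invmx (F : fieldType) n (A B : 'M[F]_n) (p : {poly F}) (eps : F) :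
  A \in unitmx -> p \is monic -> p = eps *: \det (pencil A B) ->
  char_poly (B *m invmx A) = p.
Proof.
move=> A_unit p_monic def_p.
have detE : \det (pencil A B) = char_poly (B *m invmx A) * (\det A)%:P.
  by rewrite -pencil_mulmx_invmx // det_mulmx det_map_mx.
have eps_detA : eps * \det A = 1.
  move: p_monic; rewrite def_p detE monicE lead_coefZ lead_coefM lead_coefC.
  by rewrite (monicP (char_poly_monic _)) mul1r => /eqP.
by rewrite def_p detE -mul_polyC mulrCA -polyCM eps_detA mulr1.
Qed.

Theorem lemma2 (F : fieldType) (l : nat) (chi eta : {poly F}) (a b c d : F) :
  (0 < l)%N ->
  chi \is monic -> size chi = l.+1 ->
  eta \is monic -> size eta = l.+1 ->
  a * d - b * c != 0 ->
  (pair_equiv (a%:M + b *: companion l chi) (c%:M + d *: companion l chi)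
              1%:M (companion l eta) ->
   exists eps : F, eta = eps *: mobius_poly l a b c d chi)
  /\
  ((a%:M + b *: companion l chi) \in unitmx ->
   (exists eps : F, eta = eps *: mobius_poly l a b c d chi) ->
   char_poly ((c%:M + d *: companion l chi) *m invmx (a%:M + b *: companion l chi))
   = char_poly (companion l eta)).
Proof.
move=> _ chi_monic size_chi eta_monic size_eta _.
have detE := det_pencil_companion a b c d chi_monic size_chi.
have char_eta := char_poly_companion eta_monic size_eta.
split=> [/char_poly_pair_equiv [eps]|A_unit [eps def_eta]].
  by rewrite char_eta detE; exists eps.
by rewrite char_eta (char_poly_mulmx_invmx (eps := eps) A_unit eta_monic) ?detE.
Qed.
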